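(* Let $D' \in \mathrm{Sym}_n(\mathbb{R}_{\geq 0})$ and let $D^A$ be the all pairs shortest path matrix of the complete weighted graph $K_n(D')$. Then for every entrywise $\ell_p$ norm, $D^A$ is a solution of \[\operatorname{argmin}\{\|D-D'\|_p : D \text{ metric},\ D \preceq D'\}.\] In particular (taking $p=1$), $D^A$ is the minimal $\ell_1$ norm decrease only metric repair. *)

From HB Require Import structures.
From mathcomp Require Import all_boot all_order all_algebra.
From mathcomp Require Import boolp classical_sets reals constructive_ereal ereal exp.
Set Implicit Arguments. Unset Strict Implicit. Unset Printing Implicit Defensive.
Import Order.TTheory GRing.Theory Num.Theory.
Local Open Scope ring_scope.
Local Open Scope classical_set_scope.

Section Defs.
Variables (R : realType) (n : nat).

Definition sym_nonneg (M : 'M[R]_n) : Prop :=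
  (forall i j, M i j = M j i) /\ (forall i j, 0 <= M i j).

Definition is_metric (D : 'M[R]_n) : Prop :=
  [/\ forall i j, D i j = D j i,
      forall i j, 0 <= D i j,
      forall i, D i i = 0 &
      forall i j k, D i k <= D i j + D j k].

Definition mx_le (D D' : 'M[R]_n) : Prop := forall i j, D i j <= D' i j.

(* weight of the walk x -> s_0 -> s_1 -> ... in the complete graph K_n(W) *)
Fixpoint walk_cost (W : 'M[R]_n) (x : 'I_n) (s : seq 'I_n) : R :=
  match s with
  | [::] => 0
  | y :: s' => W x y + walk_cost W y s'
  end.

(* all pairs shortest path matrix of the complete weighted graph K_n(W):
   (i,j) entry = infimum (in fact minimum) of the weights of walks from i to j *)
Definition apsp (W : 'M[R]_n) : 'M[R]_n :=
  \matrix_(i < n, j < n) inf [set walk_cost W i s | s in [set s | last i s = j]].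

Definition entry_lpnorm (p : \bar R) (M : 'M[R]_n) : R :=
  match p with
  | EFin r => (\sum_(i < n) \sum_(j < n) `|M i j| `^ r) `^ r^-1
  | +oo%E => \big[Num.max/0]_(i < n) \big[Num.max/0]_(j < n) `|M i j|
  | -oo%E => 0
  end.

End Defs.

From HB Require Import structures.
From mathcomp Require Import all_boot all_order all_algebra.
From mathcomp Require Import boolp classical_sets reals constructive_ereal ereal exp.
Set Implicit Arguments. Unset Strict Implicit. Unset Printing Implicit Defensive.
Import Order.TTheory GRing.Theory Num.Theory.
Local Open Scope ring_scope.

(* Concatenating walks gives the triangle inequality for the shortest path
   matrix D^A and reversing them gives its symmetry, so D^A is a metric below
   D'.  It is moreover the largest one: a metric D <= D' is bounded, by the
   triangle inequality, by the D'-cost of every walk, hence D <= D^A <= D'.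
   So |D^A - D'| <= |D - D'| entrywise, and every entrywise l_p norm is
   monotone in the absolute values of the entries. *)

Lemma last_rev_belast (T : Type) (x : T) s : last (last x s) (rev (belast x s)) = x.
Proof. by case: s => [|y s] //=; rewrite rev_cons last_rcons. Qed.

Section WalkCost.
Variables (R : realType) (n : nat) (W : 'M[R]_n).

Lemma walk_cost_cat x s t :
  walk_cost W x (s ++ t) = walk_cost W x s + walk_cost W (last x s) t.
Proof. by elim: s x => [|y s IH] x /=; rewrite ?add0r // IH addrA. Qed.

Lemma walk_cost_rcons x s y :
  walk_cost W x (rcons s y) = walk_cost W x s + W (last x s) y.
Proof. by rewrite -cats1 walk_cost_cat /= addr0. Qed.

Lemma walk_cost_ge0 :
  (forall i j, 0 <= W i j) -> forall x s, 0 <= walk_cost W x s.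
Proof. by move=> W_ge0 x s; elim: s x => [|y s IH] x //=; rewrite addr_ge0. Qed.

Lemma walk_cost_rev : (forall i j, W i j = W j i) ->
  forall x s, walk_cost W (last x s) (rev (belast x s)) = walk_cost W x s.
Proof.
move=> W_sym x s; elim: s x => [|y s IH] x //=.
rewrite rev_cons walk_cost_rcons IH addrC last_rev_belast.
by case: s {IH} => [|z s] /=; rewrite W_sym.
Qed.

End WalkCost.

Section ShortestPaths.
Variables (R : realType) (n : nat) (W : 'M[R]_n).

Lemma le_apsp i j x :
  (forall s, last i s = j -> x <= walk_cost W i s) -> x <= apsp W i j.
Proof.
move=> x_le; rewrite mxE; apply: lb_le_inf.
  by exists (walk_cost W i [:: j]), [:: j].
by move=> _ [s hs <-]; exact: x_le.
Qed.

Lemma metric_le_apsp (D : 'M[R]_n) :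
  (forall i, D i i = 0) -> (forall i j k, D i k <= D i j + D j k) ->
  mx_le D W -> mx_le D (apsp W).
Proof.
move=> D_diag D_tri DW i j; apply: le_apsp => s.
elim: s i => [|y s IH] i /=; first by move=> ->; rewrite D_diag.
by move=> /IH D_le; rewrite (le_trans (D_tri i y j)) ?lerD.
Qed.

Hypothesis W_ge0 : forall i j, 0 <= W i j.

Lemma apsp_le_walk_cost i j s : last i s = j -> apsp W i j <= walk_cost W i s.
Proof.
move=> hs; rewrite mxE; apply: ge_inf; last by exists s.
by exists 0 => _ [t _ <-]; exact: walk_cost_ge0.
Qed.

Lemma apsp_ge0 i j : 0 <= apsp W i j.
Proof. by apply: le_apsp => s _; exact: walk_cost_ge0. Qed.

Lemma apsp_le : mx_le (apsp W) W.
Proof. by move=> i j; have := @apsp_le_walk_cost i j [:: j] (erefl j); rewrite /= addr0. Qed.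

Lemma apsp_diag i : apsp W i i = 0.
Proof. by apply/le_anti; rewrite apsp_ge0 (@apsp_le_walk_cost _ _ [::]). Qed.

Lemma apsp_triangle i j k : apsp W i k <= apsp W i j + apsp W j k.
Proof.
rewrite -lerBlDr; apply: le_apsp => t ht.
rewrite lerBlDr addrC -lerBlDr; apply: le_apsp => s hs.
rewrite lerBlDr addrC -ht -walk_cost_cat.
by apply: apsp_le_walk_cost; rewrite last_cat ht hs.
Qed.

Hypothesis W_sym : forall i j, W i j = W j i.

Lemma apsp_le_sym i j : apsp W i j <= apsp W j i.
Proof.
apply: le_apsp => s hs; rewrite -walk_cost_rev // hs.
by apply: apsp_le_walk_cost; rewrite -{1}hs last_rev_belast.
Qed.

Lemma apsp_sym i j : apsp W i j = apsp W j i.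
Proof. by apply/le_anti; rewrite !apsp_le_sym. Qed.

Lemma apsp_metric : is_metric (apsp W).
Proof.
by split; [exact: apsp_sym | exact: apsp_ge0 | exact: apsp_diag | exact: apsp_triangle].
Qed.

End ShortestPaths.

Lemma entry_lpnorm_le (R : realType) (n : nat) (p : \bar R) (M N : 'M[R]_n) :
  (0 <= p)%E -> (forall i j, `|M i j| <= `|N i j|) ->
  entry_lpnorm p M <= entry_lpnorm p N.
Proof.
move=> p_ge0 MN; case: p p_ge0 => [r r_ge0 | _ | _] //=; last first.
  by apply: le_bigmax2 => i _; apply: le_bigmax2 => j _; exact: MN.
have sum_ge0 (A : 'M[R]_n) : 0 <= \sum_(i < n) \sum_(j < n) `|A i j| `^ r.
  by apply: sumr_ge0 => i _; apply: sumr_ge0 => j _; exact: powR_ge0.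
rewrite lee_fin in r_ge0.
apply: ge0_ler_powR; rewrite ?nnegrE ?invr_ge0 ?sum_ge0 //.
apply: ler_sum => i _; apply: ler_sum => j _.
by apply: ge0_ler_powR; rewrite ?nnegrE.
Qed.

Lemma mx_le_norm_subr (R : realType) (n : nat) (A B C : 'M[R]_n) :
  mx_le A B -> mx_le B C -> forall i j, `|(B - C) i j| <= `|(A - C) i j|.
Proof.
move=> AB BC i j; have AC := le_trans (AB i j) (BC i j).
by rewrite !mxE !ler0_norm ?subr_le0 // lerN2 lerD2r.
Qed.

Theorem mainTheorem2 (R : realType) (n : nat) (D' : 'M[R]_n)
    (hD' : sym_nonneg D') (p : \bar R) (hp : (1 <= p)%E) :
  [/\ is_metric (apsp D'),
      mx_le (apsp D') D' &
      forall D : 'M[R]_n, is_metric D -> mx_le D D' ->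
        entry_lpnorm p (apsp D' - D') <= entry_lpnorm p (D - D')].
Proof.
case: hD' => D'_sym D'_ge0.
split; [exact: apsp_metric | exact: apsp_le |].
move=> D [_ _ D_diag D_tri] DD'.
apply: entry_lpnorm_le; first exact: le_trans hp.
apply: mx_le_norm_subr (apsp_le D'_ge0).
exact: metric_le_apsp.
Qed.
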